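(* Let $m\ge2$. Then $|U_{\beta,m}|\ge\aleph_0$ for every $\beta\in(\mathcal{G}(m),m+1]$.
   Context: For $\beta\in(1,m+1]$ and $x\in I_{\beta,m}=[0,\frac{m}{\beta-1}]$, $\Sigma_{\beta,m}(x)=\{(\epsilon_i)\in\{0,\ldots,m\}^{\mathbb{N}}:\sum_{i\ge1}\epsilon_i\beta^{-i}=x\}$, and $U_{\beta,m}=\{x\in I_{\beta,m}:|\Sigma_{\beta,m}(x)|=1\}$. $\mathcal{G}(m)=k+1$ if $m=2k$ and $\mathcal{G}(m)=\frac{k+1+\sqrt{k^2+6k+5}}{2}$ if $m=2k+1$. *)

From Stdlib Require Import Reals Lra Lia.
Open Scope R_scope.

(* A digit sequence eps : nat -> nat, where eps i stands for the paper's
   epsilon_{i+1} (paper indexes from 1). *)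
Definition digits (m : nat) (eps : nat -> nat) : Prop :=
  forall i, (eps i <= m)%nat.

Definition expansion_value (beta : R) (eps : nat -> nat) (x : R) : Prop :=
  infinite_sum (fun i => INR (eps i) / beta ^ (S i)) x.

Definition in_Sigma (beta : R) (m : nat) (x : R) (eps : nat -> nat) : Prop :=
  digits m eps /\ expansion_value beta eps x.

Definition in_I (beta : R) (m : nat) (x : R) : Prop :=
  0 <= x <= INR m / (beta - 1).

Definition in_U (beta : R) (m : nat) (x : R) : Prop :=
  in_I beta m x /\
  exists eps, in_Sigma beta m x eps /\
    forall eps', in_Sigma beta m x eps' -> forall i, eps' i = eps i.

Definition G (m : nat) : R :=
  let k := INR (Nat.div2 m) in
  if Nat.even m then k + 1
  else (k + 1 + sqrt (k ^ 2 + 6 * k + 5)) / 2.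

(* A digit sequence e is the unique expansion of its value as soon as every
   tail value lies where no digit can be changed: after a digit < m the tail
   value is < 1 (so the digit cannot be raised) and after a digit > 0 it
   exceeds m/(beta-1) - 1 (so the digit cannot be lowered).  For the periodic
   sequences (ab)^oo and (ba)^oo with a + b = m, the two tail values sum to
   m/(beta-1), so the criterion holds as soon as both are < 1, which for
   a = floor(m/2), b = ceil(m/2) means beta^2 - b beta - a - 1 > 0, i.e.
   beta > G(m).  Prefixing zeros preserves the criterion because these
   values stay below 1, and yields infinitely many distinct points of U. *)

From Stdlib Require Import Reals Lra Lia.
From Coquelicot Require Import Coquelicot.
Open Scope R_scope.

Definition tail (n : nat) (d : nat -> nat) (i : nat) : nat := d (n + i)%nat.

Definition cons0 (d : nat -> nat) (i : nat) : nat :=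
  match i with O => O | S j => d j end.

Definition pad (n : nat) (d : nat -> nat) : nat -> nat := Nat.iter n cons0 d.

Definition alt (a b : nat) (i : nat) : nat := if Nat.even i then a else b.

Section Expansions.

Variables (m : nat) (beta : R).
Hypothesis beta_gt1 : 1 < beta.

Definition value (d : nat -> nat) : R :=
  Series (fun i => INR (d i) / beta ^ S i).

Lemma is_series_max_digits :
  is_series (fun i => INR m / beta ^ S i) (INR m / (beta - 1)).
Proof.
  assert (Hinv : Rabs (/ beta) < 1).
  { rewrite Rabs_pos_eq; [|left; apply Rinv_0_lt_compat; lra].
    rewrite <- Rinv_1; apply Rinv_lt_contravar; lra. }
  apply (is_series_ext (fun i => scal (INR m / beta) ((/ beta) ^ i))).
  - intros i; unfold scal; simpl; unfold mult; simpl.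
    rewrite pow_inv; field; split; [apply pow_nonzero|]; lra.
  - replace (INR m / (beta - 1)) with (scal (INR m / beta) (/ (1 - / beta))).
    + exact (is_series_scal_l _ _ _ (is_series_geom _ Hinv)).
    + unfold scal; simpl; unfold mult; simpl; field; lra.
Qed.

Lemma digit_term_bounds d i : digits m d ->
  0 <= INR (d i) / beta ^ S i <= INR m / beta ^ S i.
Proof.
  intros Hd; assert (Hpow : 0 < beta ^ S i) by (apply pow_lt; lra).
  split.
  - apply Rdiv_le_0_compat; [apply pos_INR | lra].
  - apply Rmult_le_compat_r; [left; apply Rinv_0_lt_compat; lra|].
    apply le_INR, Hd.
Qed.

Lemma ex_series_digits d : digits m d ->
  ex_series (fun i => INR (d i) / beta ^ S i).
Proof.
  intros Hd; apply (@ex_series_le R_AbsRing R_CompleteNormedModule _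
                      (fun i => INR m / beta ^ S i)).
  - intros i; destruct (digit_term_bounds d i Hd).
    change (norm _) with (Rabs (INR (d i) / beta ^ S i)); rewrite Rabs_pos_eq; lra.
  - exists (INR m / (beta - 1)); apply is_series_max_digits.
Qed.

Lemma value_bounds d : digits m d -> 0 <= value d <= INR m / (beta - 1).
Proof.
  intros Hd; split.
  - replace 0 with (Series (fun i => 0 * (INR (d i) / beta ^ S i)))
      by (rewrite Series_scal_l; ring).
    apply Series_le; [| apply ex_series_digits, Hd].
    intros i; destruct (digit_term_bounds d i Hd); lra.
  - rewrite <- (is_series_unique _ _ is_series_max_digits).
    apply Series_le; [intros i; apply digit_term_bounds, Hd |].
    exists (INR m / (beta - 1)); apply is_series_max_digits.
Qed.

Lemma value_ext d e : (forall i, d i = e i) -> value d = value e.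
Proof. intros H; apply Series_ext; intros i; rewrite H; reflexivity. Qed.

Lemma value_head_tail d : digits m d ->
  value d = (INR (d 0%nat) + value (tail 1 d)) / beta.
Proof.
  intros Hd; unfold value; rewrite Series_incr_1 by (apply ex_series_digits; auto).
  rewrite (Series_ext _ (fun i => / beta * (INR (tail 1 d i) / beta ^ S i))).
  - rewrite Series_scal_l; simpl; field; lra.
  - intros i; unfold tail; simpl; field; split; [apply pow_nonzero|]; lra.
Qed.

Lemma in_Sigma_value x d : in_Sigma beta m x d -> x = value d.
Proof.
  intros [_ Hs]; apply is_series_Reals in Hs.
  symmetry; exact (is_series_unique _ _ Hs).
Qed.

Lemma value_in_Sigma d : digits m d -> in_Sigma beta m (value d) d.
Proof.
  intros Hd; split; [exact Hd|].
  apply is_series_Reals, Series_correct, ex_series_digits, Hd.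
Qed.

Definition unique_criterion (e : nat -> nat) : Prop :=
  forall n,
    ((e n < m)%nat -> value (tail (S n) e) < 1) /\
    ((0 < e n)%nat -> INR m / (beta - 1) - 1 < value (tail (S n) e)).

Lemma unique_criterion_tail1 e : unique_criterion e -> unique_criterion (tail 1 e).
Proof. intros He n; exact (He (S n)). Qed.

Lemma head_eq_of_value_eq d e : digits m d -> digits m e -> unique_criterion e ->
  value d = value e -> d 0%nat = e 0%nat.
Proof.
  intros Hd He Hcrit Hval.
  rewrite (value_head_tail d Hd), (value_head_tail e He) in Hval.
  assert (Hsum : INR (d 0%nat) + value (tail 1 d) = INR (e 0%nat) + value (tail 1 e)).
  { apply (Rmult_eq_reg_r (/ beta)); [exact Hval | apply Rinv_neq_0_compat; lra]. }
  pose proof (value_bounds (tail 1 d) (fun i => Hd (S i))) as Hbd.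
  destruct (Hcrit 0%nat) as [Hraise Hlower].
  destruct (Compare_dec.lt_eq_lt_dec (d 0%nat) (e 0%nat)) as [[Hlt|]|Hgt]; auto; exfalso.
  - pose proof (Hlower ltac:(lia)) as Hlow.
    apply le_INR in Hlt; rewrite S_INR in Hlt; lra.
  - pose proof (Hd 0%nat); pose proof (Hraise ltac:(lia)) as Hhigh.
    apply le_INR in Hgt; rewrite S_INR in Hgt; lra.
Qed.

Lemma eq_of_value_eq j : forall d e, digits m d -> digits m e ->
  unique_criterion e -> value d = value e -> d j = e j.
Proof.
  induction j as [|j IH]; intros d e Hd He Hcrit Hval.
  - exact (head_eq_of_value_eq d e Hd He Hcrit Hval).
  - pose proof (head_eq_of_value_eq d e Hd He Hcrit Hval) as Hhead.
    apply (IH (tail 1 d) (tail 1 e)); [intros i; apply Hd | intros i; apply He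
                                       | apply unique_criterion_tail1, Hcrit|].
    rewrite (value_head_tail d Hd), (value_head_tail e He), Hhead in Hval.
    apply (Rmult_eq_reg_r (/ beta)) in Hval; [lra | apply Rinv_neq_0_compat; lra].
Qed.

Lemma in_U_of_unique_criterion e : digits m e -> unique_criterion e ->
  in_U beta m (value e).
Proof.
  intros He Hcrit; split; [apply value_bounds, He|].
  exists e; split; [apply value_in_Sigma, He|].
  intros d Hd i; apply eq_of_value_eq; [apply Hd | exact He | exact Hcrit|].
  symmetry; apply in_Sigma_value, Hd.
Qed.

Lemma digits_pad n d : digits m d -> digits m (pad n d).
Proof.
  intros Hd; induction n as [|n IH]; [exact Hd|].
  intros [|i]; [simpl; lia | apply IH].
Qed.

Lemma value_cons0 d : digits m d -> value (cons0 d) = value d / beta.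
Proof.
  intros Hd; rewrite value_head_tail by (intros [|i]; [simpl; lia | apply Hd]).
  simpl; rewrite Rplus_0_l; reflexivity.
Qed.

Lemma value_pad n d : digits m d -> value (pad n d) = value d / beta ^ n.
Proof.
  intros Hd; induction n as [|n IH]; [simpl; field|].
  simpl; rewrite value_cons0 by (apply digits_pad, Hd).
  fold (pad n d); rewrite IH; field; split; [apply pow_nonzero|]; lra.
Qed.

Lemma unique_criterion_cons0 d : unique_criterion d -> value d < 1 ->
  unique_criterion (cons0 d).
Proof.
  intros Hcrit Hlt1 [|n].
  - split; [intros _; exact Hlt1 | simpl; lia].
  - exact (Hcrit n).
Qed.

Lemma unique_criterion_pad n d : digits m d -> unique_criterion d -> value d < 1 ->
  unique_criterion (pad n d).
Proof.
  intros Hd Hcrit Hlt1; induction n as [|n IH]; [exact Hcrit|].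
  apply unique_criterion_cons0; [exact IH|].
  change (value (pad n d) < 1); rewrite value_pad by exact Hd.
  assert (Hpow : 1 <= beta ^ n) by (apply pow_R1_Rle; lra).
  pose proof (proj1 (value_bounds d Hd)) as Hpos.
  apply (Rle_lt_trans _ (value d)); [|exact Hlt1].
  unfold Rdiv; rewrite <- (Rmult_1_r (value d)) at 2.
  apply Rmult_le_compat_l; [exact Hpos|].
  rewrite <- Rinv_1; apply Rinv_le_contravar; lra.
Qed.

Lemma value_pad_inj d n1 n2 : digits m d -> 0 < value d ->
  value (pad n1 d) = value (pad n2 d) -> n1 = n2.
Proof.
  intros Hd Hpos; rewrite !value_pad by exact Hd; intros Heq.
  assert (Hdecr : forall k l, (k < l)%nat -> value d / beta ^ l < value d / beta ^ k).
  { intros k l Hkl; apply Rmult_lt_compat_l; [exact Hpos|].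
    apply Rinv_lt_contravar; [apply Rmult_lt_0_compat; apply pow_lt; lra|].
    apply Rlt_pow; assumption. }
  destruct (Nat.lt_total n1 n2) as [Hlt|[Heq12|Hlt]]; [| exact Heq12 |];
    pose proof (Hdecr _ _ Hlt); lra.
Qed.

Lemma digits_alt a b : (a <= m)%nat -> (b <= m)%nat -> digits m (alt a b).
Proof. intros Ha Hb i; unfold alt; destruct (Nat.even i); assumption. Qed.

Lemma tail_alt k a b i :
  tail k (alt a b) i = (if Nat.even k then alt a b else alt b a) i.
Proof.
  unfold tail, alt; rewrite Nat.even_add.
  destruct (Nat.even k), (Nat.even i); reflexivity.
Qed.

Lemma value_alt a b : (a <= m)%nat -> (b <= m)%nat ->
  value (alt a b) * (beta ^ 2 - 1) = INR a * beta + INR b.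
Proof.
  intros Ha Hb.
  pose proof (value_head_tail (alt a b) (digits_alt a b Ha Hb)) as Hab.
  pose proof (value_head_tail (alt b a) (digits_alt b a Hb Ha)) as Hba.
  rewrite (value_ext (tail 1 (alt a b)) (alt b a)) in Hab by apply tail_alt.
  rewrite (value_ext (tail 1 (alt b a)) (alt a b)) in Hba by apply tail_alt.
  change (alt a b 0%nat) with a in Hab; change (alt b a 0%nat) with b in Hba.
  set (x := value (alt a b)) in *; set (y := value (alt b a)) in *.
  assert (Hx : beta * x = INR a + y) by (rewrite Hab; field; lra).
  assert (Hy : beta * y = INR b + x) by (rewrite Hba; field; lra).
  replace (x * (beta ^ 2 - 1)) with (beta * (beta * x) - x) by ring.
  rewrite Hx, Rmult_plus_distr_l, Hy; ring.
Qed.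

Section Balanced.

Variables a b : nat.
Hypothesis sum_digits : (a + b = m)%nat.
Hypothesis ab_below_one : INR a * beta + INR b < beta ^ 2 - 1.
Hypothesis ba_below_one : INR b * beta + INR a < beta ^ 2 - 1.

Let a_le : (a <= m)%nat. Proof. lia. Qed.
Let b_le : (b <= m)%nat. Proof. lia. Qed.

(* The two tail values sum to m/(beta-1), so each exceeds m/(beta-1) - 1
   exactly because the other is below 1. *)
Lemma value_alt_bounds :
  value (alt a b) < 1 /\ value (alt b a) < 1 /\
  value (alt a b) + value (alt b a) = INR m / (beta - 1).
Proof.
  pose proof (value_alt a b a_le b_le) as Hab.
  pose proof (value_alt b a b_le a_le) as Hba.
  assert (Hsq : 0 < beta ^ 2 - 1) by nra.
  assert (Hm : INR m = INR a + INR b) by (rewrite <- sum_digits, plus_INR; reflexivity).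
  split; [|split].
  - nra.
  - nra.
  - apply (Rmult_eq_reg_r (beta ^ 2 - 1)); [|lra].
    rewrite Rmult_plus_distr_r, Hab, Hba, Hm; field; lra.
Qed.

Lemma unique_criterion_alt : unique_criterion (alt a b).
Proof.
  destruct value_alt_bounds as [Hab [Hba Hsum]].
  intros n; rewrite (value_ext _ _ (tail_alt (S n) a b)).
  destruct (Nat.even (S n)); split; intros _; lra.
Qed.

Lemma infinite_U_of_alt : (1 <= m)%nat ->
  exists f : nat -> R,
    (forall n1 n2, f n1 = f n2 -> n1 = n2) /\ (forall n, in_U beta m (f n)).
Proof.
  intros Hm.
  pose proof (digits_alt a b a_le b_le) as Hdig.
  pose proof (proj1 value_alt_bounds) as Hlt1.
  assert (Hpos : 0 < value (alt a b)).
  { pose proof (value_alt a b a_le b_le) as Hval.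
    assert (Hsum : 1 <= INR a + INR b) by (rewrite <- plus_INR, sum_digits; apply (le_INR 1), Hm).
    assert (Hnum : 0 < INR a * beta + INR b) by (pose proof (pos_INR a); nra).
    assert (Hsq : 0 < beta ^ 2 - 1) by nra.
    nra. }
  exists (fun n => value (pad n (alt a b))); split.
  - intros n1 n2; exact (value_pad_inj _ n1 n2 Hdig Hpos).
  - intros n; apply in_U_of_unique_criterion; [apply digits_pad, Hdig|].
    apply unique_criterion_pad; [exact Hdig | apply unique_criterion_alt | exact Hlt1].
Qed.

End Balanced.

End Expansions.

(* For even m = 2k, G m = k + 1 is the root of beta^2 - k beta - k - 1; for odd
   m = 2k + 1, G m is the largest root of beta^2 - (k+1) beta - k - 1. *)
Lemma quadratic_pos_of_G_lt m beta : G m < beta ->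
  1 < beta /\ INR (m - Nat.div2 m) * beta + INR (Nat.div2 m) < beta ^ 2 - 1.
Proof.
  unfold G; intros HG.
  pose proof (Nat.div2_odd m) as Hm; rewrite <- Nat.negb_even in Hm.
  set (k := Nat.div2 m) in *.
  pose proof (pos_INR k) as Hk.
  destruct (Nat.even m); simpl in Hm.
  - replace (m - k)%nat with k by lia; split; nra.
  - replace (m - k)%nat with (S k) by lia; rewrite S_INR.
    set (s := sqrt (INR k ^ 2 + 6 * INR k + 5)) in HG.
    assert (Hs0 : 0 <= s) by apply sqrt_pos.
    assert (Hs2 : s * s = INR k ^ 2 + 6 * INR k + 5) by (apply sqrt_sqrt; nra).
    split; nra.
Qed.

Theorem proposition4p3 (m : nat) (beta : R) :
  (2 <= m)%nat ->
  G m < beta <= INR m + 1 ->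
  exists f : nat -> R,
    (forall n1 n2, f n1 = f n2 -> n1 = n2) /\
    (forall n, in_U beta m (f n)).
Proof.
  intros Hm [HG _].
  destruct (quadratic_pos_of_G_lt m beta HG) as [Hbeta Hq].
  pose proof (Nat.div2_odd m) as Hdiv2.
  assert (Hle : (Nat.div2 m <= m - Nat.div2 m)%nat)
    by (destruct (Nat.odd m); simpl in Hdiv2; lia).
  apply le_INR in Hle.
  assert (Hswap : 0 <= (INR (m - Nat.div2 m) - INR (Nat.div2 m)) * (beta - 1))
    by (apply Rmult_le_pos; lra).
  apply (infinite_U_of_alt m beta Hbeta (Nat.div2 m) (m - Nat.div2 m));
    [destruct (Nat.odd m); simpl in Hdiv2; lia | lra | exact Hq | lia].
Qed.
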